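(* For each positive integer $n$, let $I_n$ be the instance of online stochastic matching with timeouts with $n$ items, $m=n$ customer types, $T=n$ time-steps, $q_j=1/n$, $\ell_j=n$ for all $j$, and $p_{ij}=1/n$, $r_{ij}=1$ for all $i,j$. Let $\mathsf{OPT}_n$ be the optimal value of the LP for $I_n$ and let $A_n$ be the supremum, over all policies, of the expected revenue on $I_n$. Then $\limsup_{n\to\infty} A_n/\mathsf{OPT}_n\le 1-\ln(2-1/e)$. Consequently, for every $\epsilon>0$ there is an instance (satisfying both $\sum_i p_{ij}\le 1$ and $\ell_j\ge n$ for every $j$) on which no policy obtains expected revenue larger than $(1-\ln(2-1/e)+\epsilon)\cdot\mathsf{OPT}$.
   Context: Online stochastic matching with timeouts. There are $n$ items, each with a single unit of inventory, $m$ customer types, and $T$ discrete time-steps. In each time-step $t=1,\dots,T$, independently of everything else, a customer of type $j$ arrives with probability $q_j\ge 0$ (where $\sum_{j}q_j\le 1$). Each type $j$ has a patience level $\ell_j\in\mathbb{Z}_{>0}$. When a customer of type $j$ arrives, the platform may offer her items one at a time; it may only offer items still in inventory and never offers the same item twice to the same customer. Each time item $i$ is offered, she purchases it with probability $p_{ij}\in[0,1]$, independently of everything else; then the platform earns $r_{ij}\ge 0$, item $i$ is sold out, and the customer leaves. The customer leaves after $\ell_j$ offers without a purchase. A customer is completely processed before the next time-step. A policy decides (possibly randomly) what to offer. The LP is: maximize $\sum_{j=1}^m Tq_j\sum_{i=1}^n r_{ij}p_{ij}x_{ij}$ subject to $\sum_{j=1}^m Tq_jp_{ij}x_{ij}\le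 1$ for all $i$; $\sum_{i=1}^n p_{ij}x_{ij}\le 1$ for all $j$; $\sum_{i=1}^n x_{ij}\le \ell_j$ for all $j$; $0\le x_{ij}\le 1$ for all $i,j$. *)

From Stdlib Require Import Reals List.
Import ListNotations.
Open Scope R_scope.

Fixpoint rsum (k : nat) (f : nat -> R) : R :=
  match k with O => 0 | S k' => rsum k' f + f k' end.

(** An instance of online stochastic matching with timeouts.
    Items are 0..n-1, customer types 0..m-1, time-steps 1..T. *)
Record instance := mkInstance {
  n_items : nat;
  m_types : nat;
  horizon : nat;
  q : nat -> R;          (* arrival probability of type j *)
  patience : nat -> nat;
  p : nat -> nat -> R;   (* p i j : purchase probability *)
  r : nat -> nat -> R    (* r i j : revenue *)
}.

Definition wf_instance (I : instance) : Prop :=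
  (forall j, (j < m_types I)%nat -> 0 <= q I j) /\
  rsum (m_types I) (q I) <= 1 /\
  (forall j, (j < m_types I)%nat -> (0 < patience I j)%nat) /\
  (forall i j, (i < n_items I)%nat -> (j < m_types I)%nat ->
      0 <= p I i j <= 1 /\ 0 <= r I i j).

(** Events of the process; histories are lists of events, most recent first. *)
Inductive event :=
  | Arrive (j : option nat)        (* a time-step starts; Some j: a type-j customer arrives *)
  | Offer (i : nat) (bought : bool). (* item i offered to current customer, with outcome *)

Definition history := list event.

Fixpoint cur_seg (h : history) : history :=
  match h with
  | [] => []
  | Arrive _ :: _ => []
  | e :: h' => e :: cur_seg h'
  end.

(** Actions: None = stop offering (customer leaves), Some i = offer item i. *)
Definition allowed (I : instance) (h : history) (a : option nat) : Prop :=
  match a with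
  | None => True
  | Some i => (i < n_items I)%nat /\ ~ In (Offer i true) h /\
              ~ (exists b, In (Offer i b) (cur_seg h))
  end.

(** A (possibly randomized, history-dependent) policy: for every history,
    a probability distribution over the allowed actions. *)
Definition policy := history -> option nat -> R.

Definition valid_policy (I : instance) (pol : policy) : Prop :=
  forall h,
    (forall a, 0 <= pol h a) /\
    (forall a, ~ allowed I h a -> pol h a = 0) /\
    pol h None + rsum (n_items I) (fun i => pol h (Some i)) = 1.

(** Expected future revenue while processing the current customer of type j,
    with k offers of patience left; cont = value after the customer leaves. *)
Fixpoint cust_val (I : instance) (pol : policy) (k j : nat) (h : history)
    (cont : history -> R) {struct k} : R :=
  match k with
  | O => cont h
  | S k' =>
      pol h None * cont h +
      rsum (n_items I) (fun i =>
        pol h (Some i) *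
          (p I i j * (r I i j + cont (Offer i true :: h)) +
           (1 - p I i j) * cust_val I pol k' j (Offer i false :: h) cont))
  end.

Fixpoint value (I : instance) (pol : policy) (t : nat) (h : history) : R :=
  match t with
  | O => 0
  | S t' =>
      rsum (m_types I) (fun j =>
        q I j * cust_val I pol (patience I j) j (Arrive (Some j) :: h) (value I pol t'))
      + (1 - rsum (m_types I) (q I)) * value I pol t' (Arrive None :: h)
  end.

Definition expected_revenue (I : instance) (pol : policy) : R :=
  value I pol (horizon I) [].

Definition achievable (I : instance) (v : R) : Prop :=
  exists pol, valid_policy I pol /\ v = expected_revenue I pol.

Definition lp_feasible (I : instance) (x : nat -> nat -> R) : Prop :=
  (forall i, (i < n_items I)%nat ->
     rsum (m_types I) (fun j => INR (horizon I) * q I j * p I i j * x i j) <= 1) /\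
  (forall j, (j < m_types I)%nat ->
     rsum (n_items I) (fun i => p I i j * x i j) <= 1) /\
  (forall j, (j < m_types I)%nat ->
     rsum (n_items I) (fun i => x i j) <= INR (patience I j)) /\
  (forall i j, (i < n_items I)%nat -> (j < m_types I)%nat -> 0 <= x i j <= 1).

Definition lp_obj (I : instance) (x : nat -> nat -> R) : R :=
  rsum (m_types I) (fun j =>
    INR (horizon I) * q I j * rsum (n_items I) (fun i => r I i j * p I i j * x i j)).

Definition lp_value (I : instance) (v : R) : Prop :=
  exists x, lp_feasible I x /\ v = lp_obj I x.

Definition inst_n (n : nat) : instance :=
  mkInstance n n n (fun _ => / INR n) (fun _ => n) (fun _ _ => / INR n) (fun _ _ => 1).

Definition ratio_bound : R := 1 - ln (2 - / exp 1).

(** On I_n every offer sells with probability 1/n and every customer may be offered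
    all n items; the LP optimum is n (attained by x = 1).  For a policy, let x be the
    number of unsold items.  A customer buys at most one item, and a customer offered
    k fresh items refuses all of them with probability (1 - 1/n)^k >= (1 - 1/n)^x.
    Writing (1 - 1/n)^x = exp(-lam x), this shows by induction on the number of
    remaining time-steps t that the expected future revenue is at most x - G^t(x),
    where G^t is the t-th iterate of g(x) = x - 1 + exp(-lam x); the convexity of G^t
    is what lets the random number of unsold items after a customer be replaced by its
    mean (Jensen).  Comparing the iteration with the explicit subsolution
    w(s) = ln(1 + u (1 - lam)^s) / lam, which satisfies w(s+1) <= g(w(s)), gives
    G^n(n) >= n ln(2 - 1/e) - 4.  Hence every policy earns at most
    n (1 - ln(2 - 1/e)) + 4, and both parts of the theorem follow. *)

From Stdlib Require Import Reals List Lra Lia Bool Classical.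
Import ListNotations.
Open Scope R_scope.

Lemma ln_le_mono (x y : R) : 0 < x -> x <= y -> ln x <= ln y.
Proof.
  intros Hx [Hlt | ->]; [left; apply ln_increasing |]; lra.
Qed.

Lemma exp_le_mono (x y : R) : x <= y -> exp x <= exp y.
Proof.
  intros [Hlt | ->]; [left; apply exp_increasing |]; lra.
Qed.

Lemma ln_lower (y : R) : 0 < y -> 1 - / y <= ln y.
Proof.
  intros Hy. pose proof (exp_ineq1_le (- ln y)) as H.
  rewrite exp_Ropp, exp_ln in H by lra. lra.
Qed.

Lemma ln_upper (y : R) : 0 < y -> ln y <= y - 1.
Proof.
  intros Hy. pose proof (exp_ineq1_le (ln y)) as H.
  rewrite exp_ln in H by lra. lra.
Qed.

Lemma exp_tangent (c a : R) : exp c * (1 + (a - c)) <= exp a.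
Proof.
  replace (exp a) with (exp c * exp (a - c)) by (rewrite <- exp_plus; f_equal; ring).
  apply Rmult_le_compat_l; [left; apply exp_pos | apply exp_ineq1_le].
Qed.

Lemma exp_convex (th a b : R) : 0 <= th <= 1 ->
  exp (th * a + (1 - th) * b) <= th * exp a + (1 - th) * exp b.
Proof.
  intros Hth. set (c := th * a + (1 - th) * b).
  pose proof (exp_tangent c a). pose proof (exp_tangent c b).
  assert (E : th * (exp c * (1 + (a - c))) + (1 - th) * (exp c * (1 + (b - c))) = exp c)
    by (unfold c; ring).
  nra.
Qed.

(** The drift map: with x unsold items, one time-step sells one item unless the
    customer refuses all of them, which happens with probability exp(-lam x). *)
Definition g (lam x : R) : R := x - 1 + exp (- (lam * x)).

Definition G (lam : R) (t : nat) : R -> R := Nat.iter t (g lam).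

Lemma g_zero (lam : R) : g lam 0 = 0.
Proof. unfold g. rewrite Rmult_0_r, Ropp_0, exp_0. ring. Qed.

(** For 0 < lam <= 1, [g lam] is nondecreasing on [0, oo): its slope
    1 - lam exp(-lam x) is nonnegative there. *)
Lemma g_mono (lam u v : R) : 0 < lam <= 1 -> 0 <= u -> u <= v -> g lam u <= g lam v.
Proof.
  intros Hl Hu Huv. unfold g.
  pose proof (exp_tangent (- (lam * u)) (- (lam * v))) as Htan.
  assert (Hexp : exp (- (lam * u)) <= 1).
  { rewrite <- exp_0. apply exp_le_mono. nra. }
  pose proof (exp_pos (- (lam * u))).
  assert (Hslope : exp (- (lam * u)) * lam <= 1) by nra.
  assert (exp (- (lam * u)) * lam * (v - u) <= v - u) by nra.
  nra.
Qed.

Lemma g_nonneg (lam u : R) : 0 < lam <= 1 -> 0 <= u -> 0 <= g lam u.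
Proof. intros Hl Hu. rewrite <- (g_zero lam). apply g_mono; lra. Qed.

Lemma g_convex (lam th u v : R) : 0 <= th <= 1 ->
  g lam (th * u + (1 - th) * v) <= th * g lam u + (1 - th) * g lam v.
Proof.
  intros Hth. unfold g.
  replace (- (lam * (th * u + (1 - th) * v))) with
    (th * (- (lam * u)) + (1 - th) * (- (lam * v))) by ring.
  pose proof (exp_convex th (- (lam * u)) (- (lam * v)) Hth). lra.
Qed.

Lemma G_zero (lam : R) (t : nat) : G lam t 0 = 0.
Proof. induction t as [|t IH]; [reflexivity|]. unfold G in *. simpl. rewrite IH. apply g_zero. Qed.

Lemma G_mono (lam : R) (t : nat) (u v : R) : 0 < lam <= 1 ->
  0 <= u -> u <= v -> G lam t u <= G lam t v.
Proof.
  intros Hl. revert u v. induction t as [|t IH]; intros u v Hu Huv; [exact Huv|].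
  unfold G. rewrite !Nat.iter_succ_r.
  apply IH; [apply g_nonneg | apply g_mono]; assumption.
Qed.

(** Convexity of the iterates: an increasing convex map composed with a convex
    map is convex. *)
Lemma G_convex (lam : R) (t : nat) (th u v : R) : 0 < lam <= 1 -> 0 <= th <= 1 ->
  0 <= u -> 0 <= v ->
  G lam t (th * u + (1 - th) * v) <= th * G lam t u + (1 - th) * G lam t v.
Proof.
  intros Hl Hth. revert u v. induction t as [|t IH]; intros u v Hu Hv; [apply Rle_refl|].
  unfold G in *. rewrite !Nat.iter_succ_r.
  pose proof (g_nonneg lam u Hl Hu). pose proof (g_nonneg lam v Hl Hv).
  eapply Rle_trans; [apply G_mono | apply IH]; try assumption.
  - apply g_nonneg; nra.
  - apply g_convex; assumption.
Qed.

(** An explicit subsolution of the iteration x -> g lam x, namely a discrete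
    version of the solution of x' = -1 + exp(-lam x). *)
Definition w (lam u : R) (s : nat) : R := ln (1 + u * (1 - lam) ^ s) / lam.

Lemma w_start (lam x : R) : 0 < lam -> w lam (exp (lam * x) - 1) 0 = x.
Proof.
  intros Hl. unfold w. simpl. rewrite Rmult_1_r.
  replace (1 + (exp (lam * x) - 1)) with (exp (lam * x)) by ring.
  rewrite ln_exp. field. lra.
Qed.

Lemma w_nonneg (lam u : R) (s : nat) : 0 < lam < 1 -> 0 <= u -> 0 <= w lam u s.
Proof.
  intros Hl Hu. unfold w. pose proof (pow_le (1 - lam) s ltac:(lra)).
  apply Rmult_le_pos; [| left; apply Rinv_0_lt_compat; lra].
  rewrite <- ln_1. apply ln_le_mono; nra.
Qed.

(** One step of [w] falls below one step of [g]: with U = u (1-lam)^s this is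
    ln(1+U) - ln(1+(1-lam)U) >= lam (1 - 1/(1+U)), an instance of [ln_lower]. *)
Lemma w_step (lam u : R) (s : nat) : 0 < lam < 1 -> 0 <= u ->
  w lam u (S s) <= g lam (w lam u s).
Proof.
  intros Hl Hu. unfold w, g. simpl.
  set (U := u * (1 - lam) ^ s).
  assert (HU : 0 <= U) by (unfold U; pose proof (pow_le (1 - lam) s ltac:(lra)); nra).
  replace (u * ((1 - lam) * (1 - lam) ^ s)) with ((1 - lam) * U) by (unfold U; ring).
  replace (- (lam * (ln (1 + U) / lam))) with (- ln (1 + U)) by (field; lra).
  rewrite exp_Ropp, exp_ln by lra.
  pose proof (ln_lower ((1 + U) / (1 + (1 - lam) * U)) ltac:(apply Rdiv_lt_0_compat; nra)) as H.
  unfold Rdiv in H. rewrite ln_mult, ln_Rinv, Rinv_mult, Rinv_inv in H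
    by (try apply Rinv_0_lt_compat; nra).
  replace (1 - / (1 + U) * (1 + (1 - lam) * U)) with (lam * (1 - / (1 + U))) in H
    by (field; lra).
  apply (Rmult_le_reg_l lam); [lra|].
  replace (lam * (ln (1 + (1 - lam) * U) / lam)) with (ln (1 + (1 - lam) * U)) by (field; lra).
  replace (lam * (ln (1 + U) / lam - 1 + / (1 + U))) with (ln (1 + U) - lam * (1 - / (1 + U)))
    by (field; lra).
  lra.
Qed.

(** Comparison principle: starting at or above [w] at time s, the iteration
    of [g] stays above [w]; this uses that [g] is nondecreasing. *)
Lemma w_below_G (lam u : R) (t s : nat) (x : R) : 0 < lam < 1 -> 0 <= u ->
  0 <= x -> w lam u s <= x -> w lam u (s + t) <= G lam t x.
Proof.
  intros Hl Hu. revert s x. induction t as [|t IH]; intros s x Hx Hw.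
  - rewrite Nat.add_0_r. exact Hw.
  - unfold G. rewrite Nat.iter_succ_r. fold (G lam t (g lam x)).
    replace (s + S t)%nat with (S s + t)%nat by lia.
    apply IH; [apply g_nonneg; lra |].
    eapply Rle_trans; [apply w_step; assumption |].
    apply g_mono; [lra | apply w_nonneg | ]; assumption.
Qed.

(** The rate for which exp(-lam_n x) = (1 - 1/n)^x. *)
Definition lamn (n : nat) : R := - ln (1 - / INR n).

Definition beta : R := 2 - / exp 1.

Lemma inv_INR_bounds (n : nat) : (2 <= n)%nat -> 0 < / INR n <= / 2.
Proof.
  intros Hn. apply le_INR in Hn. simpl in Hn.
  split; [apply Rinv_0_lt_compat | apply Rinv_le_contravar]; lra.
Qed.

Lemma lamn_bounds (n : nat) : (2 <= n)%nat -> / INR n <= lamn n <= / (INR n - 1).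
Proof.
  intros Hn. pose proof (inv_INR_bounds n Hn) as Hi.
  assert (HN : 2 <= INR n) by (apply le_INR in Hn; exact Hn).
  unfold lamn. split.
  - pose proof (ln_upper (1 - / INR n) ltac:(lra)). lra.
  - pose proof (ln_lower (1 - / INR n) ltac:(lra)) as H.
    replace (1 - / (1 - / INR n)) with (- / (INR n - 1)) in H by (field; lra). lra.
Qed.

Lemma lamn_range (n : nat) : (2 <= n)%nat -> 0 < lamn n <= 1.
Proof.
  intros Hn.
  destruct (lamn_bounds n Hn) as [L1 L2]. pose proof (inv_INR_bounds n Hn).
  assert (HN : 2 <= INR n) by (apply le_INR in Hn; exact Hn).
  assert (/ (INR n - 1) <= 1) by (rewrite <- Rinv_1; apply Rinv_le_contravar; lra).
  lra.
Qed.

Lemma exp_lamn (n m : nat) : (2 <= n)%nat -> exp (- (lamn n * INR m)) = (1 - / INR n) ^ m.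
Proof.
  intros Hn. pose proof (inv_INR_bounds n Hn).
  unfold lamn. rewrite <- (exp_ln ((1 - / INR n) ^ m)) by (apply pow_lt; lra).
  rewrite ln_pow by lra. f_equal. ring.
Qed.

Lemma beta_bounds : 1 < beta < 2.
Proof.
  pose proof (exp_ineq1 1 ltac:(lra)) as He.
  assert (Hi : 0 < / exp 1 < 1).
  { split; [apply Rinv_0_lt_compat; lra |].
    rewrite <- Rinv_1 at 2. apply Rinv_lt_contravar; lra. }
  unfold beta. lra.
Qed.

Lemma ln_beta_bounds : 0 <= ln beta <= 1.
Proof.
  pose proof beta_bounds. pose proof (exp_ineq1 1 ltac:(lra)). split.
  - rewrite <- ln_1. apply ln_le_mono; lra.
  - rewrite <- (ln_exp 1). apply ln_le_mono; lra.
Qed.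

(** (1-a)^k >= exp(-k a/(1-a)), from ln(1-a) >= -a/(1-a). *)
Lemma pow_one_minus_lower (a : R) (k : nat) : 0 <= a < 1 ->
  exp (- (INR k * (a / (1 - a)))) <= (1 - a) ^ k.
Proof.
  intros Ha. rewrite <- (exp_ln ((1 - a) ^ k)) by (apply pow_lt; lra).
  rewrite ln_pow by lra. apply exp_le_mono.
  pose proof (ln_lower (1 - a) ltac:(lra)) as H.
  replace (1 - / (1 - a)) with (- (a / (1 - a))) in H by (field; lra).
  pose proof (pos_INR k). nra.
Qed.

(** (1 - lam_n)^n >= (1 - 2/(n-2))/e: since lam_n <= 1/(n-1), the
    exponent n lam_n/(1-lam_n) is at most 1 + 2/(n-2). *)
Lemma pow_one_minus_lamn (n : nat) : (4 <= n)%nat ->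
  / exp 1 * (1 - 2 / (INR n - 2)) <= (1 - lamn n) ^ n.
Proof.
  intros Hn. assert (HN : 4 <= INR n) by (apply le_INR in Hn; simpl in Hn; lra).
  destruct (lamn_bounds n ltac:(lia)) as [L1 L2].
  pose proof (inv_INR_bounds n ltac:(lia)).
  assert (L3 : / (INR n - 1) <= / 3) by (apply Rinv_le_contravar; lra).
  set (lam := lamn n) in *. set (d := 2 / (INR n - 2)).
  assert (Hexponent : INR n * (lam / (1 - lam)) <= 1 + d).
  { assert (Hlam : lam * (INR n - 1) <= 1).
    { apply (Rmult_le_compat_r (INR n - 1)) in L2; [|lra].
      rewrite Rinv_l in L2; lra. }
    unfold d. apply (Rmult_le_reg_r ((1 - lam) * (INR n - 2))); [nra|].
    replace (INR n * (lam / (1 - lam)) * ((1 - lam) * (INR n - 2)))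
      with (INR n * lam * (INR n - 2)) by (field; lra).
    replace ((1 + 2 / (INR n - 2)) * ((1 - lam) * (INR n - 2)))
      with (INR n * (1 - lam)) by (field; lra).
    nra. }
  eapply Rle_trans; [| apply pow_one_minus_lower; lra].
  eapply Rle_trans; [| apply exp_le_mono, Ropp_le_contravar, Hexponent].
  rewrite Ropp_plus_distr, exp_plus, exp_Ropp.
  pose proof (exp_ineq1_le (- d)). pose proof (Rinv_0_lt_compat _ (exp_pos 1)). nra.
Qed.

Lemma ln_sub_le (x y : R) : 0 < x -> 0 < y -> ln x - ln y <= x / y - 1.
Proof.
  intros Hx Hy. pose proof (ln_upper (x / y) ltac:(apply Rdiv_lt_0_compat; lra)) as H.
  unfold Rdiv in *. rewrite ln_mult, ln_Rinv in H by (try apply Rinv_0_lt_compat; lra).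
  lra.
Qed.

Lemma error_term_bounds (n : nat) : (4 <= n)%nat ->
  0 <= 2 / (INR n - 2) <= 1 /\ (INR n - 1) * (2 / (INR n - 2)) <= 3.
Proof.
  intros Hn. assert (HN : 4 <= INR n) by (apply le_INR in Hn; simpl in Hn; lra).
  assert (Hinv : 0 < / (INR n - 2) <= / 2)
    by (split; [apply Rinv_0_lt_compat | apply Rinv_le_contravar]; lra).
  replace ((INR n - 1) * (2 / (INR n - 2))) with (2 + 2 / (INR n - 2)) by (field; lra).
  unfold Rdiv. lra.
Qed.

(** The argument of the logarithm in w(n), started at w(0) = n, is at least
    2 - 1/e - 2/(n-2): it is 1 + (e^(lam_n n) - 1)(1-lam_n)^n with lam_n n >= 1. *)
Lemma w_at_n_argument (n : nat) : (4 <= n)%nat ->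
  beta - 2 / (INR n - 2) <= 1 + (exp (lamn n * INR n) - 1) * (1 - lamn n) ^ n.
Proof.
  intros Hn. assert (HN : 4 <= INR n) by (apply le_INR in Hn; simpl in Hn; lra).
  destruct (lamn_bounds n ltac:(lia)) as [L1 _].
  pose proof (pow_one_minus_lamn n Hn) as Hpow.
  destruct (error_term_bounds n Hn) as [Hd _].
  set (d := 2 / (INR n - 2)) in *.
  assert (Hlamn : 1 <= lamn n * INR n).
  { apply (Rmult_le_compat_r (INR n)) in L1; [|lra]. rewrite Rinv_l in L1; lra. }
  assert (He : exp 1 <= exp (lamn n * INR n)) by (apply exp_le_mono; lra).
  pose proof (exp_ineq1_le 1). pose proof (Rinv_0_lt_compat _ (exp_pos 1)).
  assert (/ exp 1 * (1 - d) * (exp 1 - 1) <= (1 - lamn n) ^ n * (exp (lamn n * INR n) - 1))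
    by (apply Rmult_le_compat; [nra | lra | exact Hpow | lra]).
  assert (/ exp 1 * (1 - d) * (exp 1 - 1) = (1 - d) * (1 - / exp 1)) by (field; lra).
  unfold beta. nra.
Qed.

(** The subsolution started at x = n is still at least n ln(2 - 1/e) - 4 after n
    steps: its logarithm is at least ln(2 - 1/e) - 2/(n-2), and 1/lam_n >= n - 1. *)
Lemma w_at_n (n : nat) : (4 <= n)%nat ->
  INR n * ln beta - 4 <= w (lamn n) (exp (lamn n * INR n) - 1) n.
Proof.
  intros Hn. assert (HN : 4 <= INR n) by (apply le_INR in Hn; simpl in Hn; lra).
  destruct (lamn_bounds n ltac:(lia)) as [L1 L2].
  destruct (error_term_bounds n Hn) as [Hd Hnd].
  pose proof (w_at_n_argument n Hn) as Harg.
  pose proof ln_beta_bounds. pose proof beta_bounds.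
  pose proof (inv_INR_bounds n ltac:(lia)).
  assert (/ (INR n - 1) <= / 3) by (apply Rinv_le_contravar; lra).
  set (lam := lamn n) in *. set (d := 2 / (INR n - 2)) in *.
  assert (Hinv : INR n - 1 <= / lam).
  { apply (Rmult_le_reg_r lam); [lra|]. rewrite Rinv_l by lra.
    apply (Rmult_le_compat_l (INR n - 1)) in L2; [|lra]. rewrite Rinv_r in L2; lra. }
  set (Q := 1 + (exp (lam * INR n) - 1) * (1 - lam) ^ n) in *.
  assert (HQ : 1 <= Q).
  { pose proof (exp_le_mono 0 (lam * INR n) ltac:(nra)) as He. rewrite exp_0 in He.
    pose proof (pow_le (1 - lam) n ltac:(lra)). unfold Q. nra. }
  assert (HlnQ : ln beta - d <= ln Q).
  { pose proof (ln_sub_le beta Q ltac:(lra) ltac:(lra)).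
    assert (beta / Q - 1 <= d).
    { apply (Rmult_le_reg_r Q); [lra|]. unfold Rdiv.
      rewrite Rmult_minus_distr_r, Rmult_assoc, Rinv_l; nra. }
    lra. }
  assert (HlnQ0 : 0 <= ln Q) by (rewrite <- ln_1; apply ln_le_mono; lra).
  unfold w. fold Q. unfold Rdiv.
  assert (ln Q * (INR n - 1) <= ln Q * / lam) by (apply Rmult_le_compat_l; lra).
  nra.
Qed.

Lemma rsum_le (k : nat) (f f' : nat -> R) :
  (forall i, (i < k)%nat -> f i <= f' i) -> rsum k f <= rsum k f'.
Proof.
  induction k as [|k IH]; simpl; intros H; [lra|].
  pose proof (IH ltac:(intros; apply H; lia)). pose proof (H k ltac:(lia)). lra.
Qed.

Lemma rsum_ext (k : nat) (f f' : nat -> R) :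
  (forall i, (i < k)%nat -> f i = f' i) -> rsum k f = rsum k f'.
Proof.
  induction k as [|k IH]; simpl; intros H; [reflexivity|].
  rewrite IH, H by (intros; try apply H; lia). reflexivity.
Qed.

Lemma rsum_mult_r (k : nat) (f : nat -> R) (c : R) :
  rsum k (fun i => f i * c) = rsum k f * c.
Proof. induction k as [|k IH]; simpl; [ring|]. rewrite IH. ring. Qed.

Lemma rsum_const (k : nat) (c : R) : rsum k (fun _ => c) = INR k * c.
Proof. induction k as [|k IH]; [simpl; ring|]. cbn [rsum]. rewrite IH, S_INR. ring. Qed.

Lemma rsum_inv_n (n : nat) : (1 <= n)%nat -> rsum n (fun _ => / INR n) = 1.
Proof.
  intros Hn. apply le_INR in Hn. simpl in Hn. rewrite rsum_const. field. lra.
Qed.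

Lemma policy_average_le (I : instance) (pol : policy) (h : history)
    (B stop : R) (offer : nat -> R) :
  valid_policy I pol -> stop <= B ->
  (forall i, (i < n_items I)%nat -> allowed I h (Some i) -> offer i <= B) ->
  pol h None * stop + rsum (n_items I) (fun i => pol h (Some i) * offer i) <= B.
Proof.
  intros Hv Hstop Hoffer. destruct (Hv h) as [Hpos [Hnot Hsum]].
  assert (Hle : rsum (n_items I) (fun i => pol h (Some i) * offer i)
                <= rsum (n_items I) (fun i => pol h (Some i) * B)).
  { apply rsum_le. intros i Hi.
    destruct (classic (allowed I h (Some i))) as [Ha | Hna].
    - apply Rmult_le_compat_l; [apply Hpos | apply Hoffer; assumption].
    - rewrite (Hnot _ Hna). lra. }
  rewrite rsum_mult_r in Hle.
  pose proof (Rmult_le_compat_l _ _ _ (Hpos None) Hstop). nra.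
Qed.

Definition sold (h : history) (i : nat) : bool :=
  existsb (fun e => match e with Offer i' true => Nat.eqb i i' | _ => false end) h.

Definition offered (h : history) (i : nat) : bool :=
  existsb (fun e => match e with Offer i' _ => Nat.eqb i i' | _ => false end) (cur_seg h).

Fixpoint count (n : nat) (f : nat -> bool) : nat :=
  match n with O => O | S n' => (count n' f + (if f n' then 1 else 0))%nat end.

Definition unsold (n : nat) (h : history) : nat := count n (fun i => negb (sold h i)).
Definition fresh (n : nat) (h : history) : nat :=
  count n (fun i => negb (sold h i) && negb (offered h i)).

Lemma count_ext (n : nat) (f f' : nat -> bool) :
  (forall i, (i < n)%nat -> f i = f' i) -> count n f = count n f'.
Proof.
  induction n as [|n IH]; simpl; intros H; [reflexivity|].
  rewrite IH by (intros; apply H; lia). rewrite H by lia. reflexivity.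
Qed.

Lemma count_remove_one (n : nat) (f f' : nat -> bool) (i : nat) :
  (i < n)%nat -> f i = true -> f' i = false ->
  (forall k, (k < n)%nat -> k <> i -> f' k = f k) -> S (count n f') = count n f.
Proof.
  induction n as [|n IH]; simpl; intros Hi Hf Hf' Hk; [lia|].
  destruct (Nat.eq_dec i n) as [-> | Hne].
  - rewrite Hf, Hf', (count_ext n f' f) by (intros; apply Hk; lia). lia.
  - rewrite <- IH; [| lia | assumption | assumption | intros; apply Hk; lia].
    rewrite (Hk n) by lia. lia.
Qed.

Lemma allowed_fresh (I : instance) (h : history) (i : nat) :
  allowed I h (Some i) -> sold h i = false /\ offered h i = false.
Proof.
  intros [_ [Hsold Hoff]]. split; apply not_true_iff_false; intros E;
    apply existsb_exists in E as [[x | i' b] [Hin Hmatch]]; try discriminate.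
  - destruct b; [|discriminate]. apply Nat.eqb_eq in Hmatch. subst. contradiction.
  - apply Nat.eqb_eq in Hmatch. subst. eauto.
Qed.

Lemma unsold_nil (n : nat) : unsold n [] = n.
Proof.
  unfold unsold. induction n as [|n IH]; [reflexivity|].
  cbn [count]. rewrite IH. simpl. lia.
Qed.

Lemma fresh_arrive (n : nat) (x : option nat) (h : history) :
  fresh n (Arrive x :: h) = unsold n h.
Proof.
  apply count_ext. intros i _. unfold offered. simpl.
  rewrite andb_true_r. reflexivity.
Qed.

Lemma unsold_sale (n i : nat) (h : history) : (i < n)%nat -> sold h i = false ->
  S (unsold n (Offer i true :: h)) = unsold n h.
Proof.
  intros Hi Hs. apply count_remove_one with i; try assumption.
  - rewrite Hs. reflexivity.
  - unfold sold. simpl. rewrite Nat.eqb_refl. reflexivity.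
  - intros k _ Hk. unfold sold. simpl. apply Nat.eqb_neq in Hk. rewrite Hk. reflexivity.
Qed.

Lemma fresh_refusal (n i : nat) (h : history) : (i < n)%nat ->
  sold h i = false -> offered h i = false ->
  S (fresh n (Offer i false :: h)) = fresh n h.
Proof.
  intros Hi Hs Ho. apply count_remove_one with i; try assumption.
  - rewrite Hs, Ho. reflexivity.
  - unfold offered. simpl. rewrite Nat.eqb_refl, andb_false_r. reflexivity.
  - intros k _ Hk. unfold offered, sold. simpl. apply Nat.eqb_neq in Hk. rewrite Hk.
    reflexivity.
Qed.

Section Policy_bounds.

Variables (n : nat) (pol : policy).
Hypothesis Hn : (2 <= n)%nat.
Hypothesis Hpol : valid_policy (inst_n n) pol.

(** A customer with [unsold h = m] and [fresh h = k] remaining candidates: if the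
    continuation is at most [Y] when nothing is sold and at most [X] after a sale,
    then serving her yields at most  a^k Y + (1 - a^k)(1 + X)  with a = 1 - 1/n,
    because each offer of a fresh item succeeds with probability 1/n. *)
Lemma customer_bound (cont : history -> R) (X Y : R) (m : nat) :
  (forall h', unsold n h' = m -> cont h' <= Y) ->
  (forall h', S (unsold n h') = m -> cont h' <= X) ->
  Y <= 1 + X ->
  forall c j h, unsold n h = m ->
    let P := (1 - / INR n) ^ fresh n h in
    cust_val (inst_n n) pol c j h cont <= P * Y + (1 - P) * (1 + X).
Proof.
  intros HY HX HXY. pose proof (inv_INR_bounds n Hn) as Hi.
  set (a := 1 - / INR n).
  assert (Hbound : forall k, Y <= a ^ k * Y + (1 - a ^ k) * (1 + X)).
  { intros k. assert (0 <= a ^ k <= 1) by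
      (split; [apply pow_le | rewrite <- (pow1 k); apply pow_incr]; unfold a; lra).
    nra. }
  induction c as [|c IH]; intros j h Hm P; cbn [cust_val].
  - specialize (HY h Hm). specialize (Hbound (fresh n h)). unfold P. lra.
  - apply policy_average_le;
      [assumption | specialize (HY h Hm); specialize (Hbound (fresh n h)); unfold P; lra |].
    intros i Hi_n Hallowed. cbn [p r inst_n].
    destruct (allowed_fresh _ _ _ Hallowed) as [Hsold Hoff].
    pose proof (HX _ (eq_trans (unsold_sale n i h Hi_n Hsold) Hm)) as Hsale.
    pose proof (IH j (Offer i false :: h) Hm) as Hrefusal. cbv zeta in Hrefusal.
    unfold P. rewrite <- (fresh_refusal n i h Hi_n Hsold Hoff). simpl pow. fold a.
    set (P' := a ^ fresh n (Offer i false :: h)) in *.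
    replace (/ INR n) with (1 - a) by (unfold a; ring).
    assert (Ha : 0 <= a <= 1) by (unfold a; lra).
    assert ((1 - a) * (1 + cont (Offer i true :: h)) <= (1 - a) * (1 + X))
      by (apply Rmult_le_compat_l; lra).
    assert (a * cust_val (inst_n n) pol c j (Offer i false :: h) cont
            <= a * (P' * Y + (1 - P') * (1 + X))) by (apply Rmult_le_compat_l; lra).
    nra.
Qed.

(** With x = unsold h > 0 and P = (1-1/n)^x,
    [customer_bound] gives  x - (P G^t(x) + (1-P) G^t(x-1)), and convexity of
    G^t bounds this by  x - G^t(x - 1 + P) = x - G^t(g x). *)
Lemma arrival_bound (t : nat) :
  (forall h, value (inst_n n) pol t h <= INR (unsold n h) - G (lamn n) t (INR (unsold n h))) ->
  forall j h, cust_val (inst_n n) pol n j (Arrive (Some j) :: h) (value (inst_n n) pol t)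
    <= INR (unsold n h) - G (lamn n) (S t) (INR (unsold n h)).
Proof.
  intros IH j h. pose proof (lamn_range n Hn) as Hl.
  unfold G. rewrite Nat.iter_succ_r. fold (G (lamn n) t).
  destruct (unsold n h) as [|m] eqn:Em.
  - (* no item left: nothing can be sold *)
    simpl INR. rewrite g_zero, G_zero.
    eapply Rle_trans.
    + apply (customer_bound _ (- 1) 0 0%nat).
      * intros h' E. specialize (IH h'). rewrite E, G_zero in IH. simpl in IH. lra.
      * discriminate.
      * lra.
      * exact Em.
    + cbv zeta. rewrite fresh_arrive, Em. simpl. lra.
  - set (x := INR (S m)).
    assert (Hx : 1 <= x) by (unfold x; rewrite S_INR; pose proof (pos_INR m); lra).
    eapply Rle_trans.
    + apply (customer_bound _ ((x - 1) - G (lamn n) t (x - 1)) (x - G (lamn n) t x) (S m)).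
      * intros h' E. specialize (IH h'). rewrite E in IH. exact IH.
      * intros h' E. specialize (IH h'). injection E as E.
        replace (INR (unsold n h')) with (x - 1) in IH
          by (unfold x; rewrite S_INR, E; ring).
        exact IH.
      * pose proof (G_mono (lamn n) t (x - 1) x Hl ltac:(lra) ltac:(lra)). lra.
      * exact Em.
    + cbv zeta. rewrite fresh_arrive, Em, <- (exp_lamn n (S m) Hn). fold x.
      set (P := exp (- (lamn n * x))).
      assert (HP : 0 <= P <= 1).
      { split; [left; apply exp_pos |]. unfold P. rewrite <- exp_0. apply exp_le_mono. nra. }
      pose proof (G_convex (lamn n) t P x (x - 1) Hl HP ltac:(lra) ltac:(lra)).
      replace (g (lamn n) x) with (P * x + (1 - P) * (x - 1)) by (unfold g, P; ring).
      lra.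
Qed.

(** The expected revenue over the last t time-steps is at most x - G^t(x),
    x the number of unsold items.  On I_n exactly one customer arrives per step. *)
Lemma value_bound (t : nat) (h : history) :
  value (inst_n n) pol t h <= INR (unsold n h) - G (lamn n) t (INR (unsold n h)).
Proof.
  pose proof (inv_INR_bounds n Hn) as Hi.
  assert (HN : 2 <= INR n) by (apply le_INR in Hn; exact Hn).
  revert h. induction t as [|t IH]; intros h; cbn [value].
  - simpl. lra.
  - cbn [m_types q patience inst_n].
    rewrite rsum_inv_n, Rminus_diag, Rmult_0_l, Rplus_0_r by lia.
    apply Rle_trans with (rsum n (fun _ =>
      / INR n * (INR (unsold n h) - G (lamn n) (S t) (INR (unsold n h))))).
    + apply rsum_le. intros j _. apply Rmult_le_compat_l; [lra |].
      apply arrival_bound. exact IH.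
    + rewrite rsum_mult_r, rsum_inv_n by lia. lra.
Qed.

End Policy_bounds.

(** Every policy earns at most n (1 - ln(2 - 1/e)) + 4 on I_n: starting from n
    unsold items, the iteration of g stays above the subsolution w started at n. *)
Lemma revenue_bound (n : nat) (pol : policy) : (4 <= n)%nat ->
  valid_policy (inst_n n) pol -> expected_revenue (inst_n n) pol <= INR n * (1 - ln beta) + 4.
Proof.
  intros Hn Hpol. unfold expected_revenue. cbn [horizon inst_n].
  eapply Rle_trans; [apply value_bound; [lia | exact Hpol] |]. rewrite unsold_nil.
  assert (HN : 4 <= INR n) by (apply le_INR in Hn; simpl in Hn; lra).
  pose proof (lamn_range n ltac:(lia)) as Hl.
  assert (Hlam1 : lamn n < 1).
  { destruct (lamn_bounds n ltac:(lia)) as [_ L2].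
    assert (/ (INR n - 1) < 1) by (rewrite <- Rinv_1 at 2; apply Rinv_lt_contravar; lra).
    lra. }
  pose proof (w_at_n n Hn) as Hw.
  set (u := exp (lamn n * INR n) - 1) in *.
  assert (Hu : 0 <= u).
  { pose proof (exp_le_mono 0 (lamn n * INR n) ltac:(nra)) as H.
    rewrite exp_0 in H. unfold u. lra. }
  pose proof (w_below_G (lamn n) u n 0 (INR n) ltac:(lra) Hu ltac:(lra)
                (Req_le _ _ (w_start (lamn n) (INR n) ltac:(lra)))) as Hcmp.
  simpl in Hcmp. lra.
Qed.

(** The LP optimum of I_n is n: each type contributes at most
    sum_i x_ij / n <= 1, and x = 1 is feasible. *)
Lemma lp_opt_inst_n (n : nat) : (1 <= n)%nat -> is_lub (lp_value (inst_n n)) (INR n).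
Proof.
  intros Hn. assert (HN : 1 <= INR n) by (apply le_INR in Hn; simpl in Hn; lra).
  split.
  - intros v [x [[_ [Hbuy _]] ->]]. unfold lp_obj.
    cbn [m_types n_items horizon q p r inst_n] in *.
    apply Rle_trans with (rsum n (fun _ => 1)); [| rewrite rsum_const; lra].
    apply rsum_le. intros j Hj. specialize (Hbuy j Hj).
    rewrite Rinv_r, (rsum_ext _ _ (fun i => / INR n * x i j)) by (intros; ring || lra).
    lra.
  - intros b Hb. apply Hb. exists (fun _ _ => 1). split.
    + unfold lp_feasible. cbn [m_types n_items horizon q p r patience inst_n].
      repeat split; intros; rewrite ?rsum_const; try lra; right; field; lra.
    + unfold lp_obj. cbn [m_types n_items horizon q p r inst_n].
      rewrite !rsum_const. field. lra.
Qed.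

Lemma inst_n_wf (n : nat) : (1 <= n)%nat -> wf_instance (inst_n n).
Proof.
  intros Hn. pose proof (rsum_inv_n n Hn).
  assert (HN : 1 <= INR n) by (apply le_INR in Hn; exact Hn).
  assert (0 < / INR n <= 1)
    by (split; [apply Rinv_0_lt_compat | rewrite <- Rinv_1; apply Rinv_le_contravar]; lra).
  unfold wf_instance. cbn [m_types n_items q patience p r inst_n].
  repeat split; intros; lra || lia.
Qed.

Lemma eventually_large (eps : R) : 0 < eps ->
  exists N, forall n, (N <= n)%nat -> (4 <= n)%nat /\ 4 <= eps * INR n.
Proof.
  intros He. destruct (INR_archimed eps 4 He) as [N HN].
  exists (Nat.max 4 N). intros n Hn. split; [lia|].
  assert (INR N <= INR n) by (apply le_INR; lia). nra.
Qed.

Lemma revenue_bound_ratio (n : nat) (eps : R) : 4 <= eps * INR n ->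
  INR n * (1 - ln beta) + 4 <= (ratio_bound + eps) * INR n.
Proof. intros H. unfold ratio_bound. fold beta. lra. Qed.

Theorem lemma3p3 :
  (forall (OPT A : nat -> R),
     (forall n, (1 <= n)%nat -> is_lub (lp_value (inst_n n)) (OPT n)) ->
     (forall n, (1 <= n)%nat -> is_lub (achievable (inst_n n)) (A n)) ->
     (* limsup_{n -> oo} A n / OPT n <= 1 - ln (2 - 1/e) *)
     forall eps, 0 < eps ->
       exists N, forall n, (N <= n)%nat -> (1 <= n)%nat ->
         A n / OPT n <= ratio_bound + eps)
  /\
  (forall eps, 0 < eps ->
     exists I : instance,
       wf_instance I /\
       (forall j, (j < m_types I)%nat -> rsum (n_items I) (fun i => p I i j) <= 1) /\
       (forall j, (j < m_types I)%nat -> (n_items I <= patience I j)%nat) /\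
       exists OPT, is_lub (lp_value I) OPT /\
         forall pol, valid_policy I pol ->
           expected_revenue I pol <= (ratio_bound + eps) * OPT).
Proof.
  split.
  - intros OPT A HOPT HA eps Heps. destruct (eventually_large eps Heps) as [N HN].
    exists N. intros n HnN Hn1. destruct (HN n HnN) as [Hn4 Heps_n].
    assert (HN4 : 4 <= INR n) by (apply le_INR in Hn4; simpl in Hn4; lra).
    rewrite (is_lub_u _ _ _ (HOPT n Hn1) (lp_opt_inst_n n Hn1)).
    assert (HAn : A n <= INR n * (1 - ln beta) + 4).
    { apply (HA n Hn1). intros v [pol [Hpol ->]]. apply revenue_bound; assumption. }
    pose proof (revenue_bound_ratio n eps Heps_n).
    apply (Rmult_le_reg_r (INR n)); [lra|].
    unfold Rdiv. rewrite Rmult_assoc, Rinv_l by lra. lra.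
  - intros eps Heps. destruct (eventually_large eps Heps) as [N HN].
    set (n := Nat.max 4 N). destruct (HN n ltac:(lia)) as [Hn4 Heps_n].
    exists (inst_n n). cbn [m_types n_items patience p inst_n].
    split; [apply inst_n_wf; lia |].
    split; [intros j _; rewrite rsum_inv_n by lia; lra |].
    split; [intros j _; lia |].
    exists (INR n). split; [apply lp_opt_inst_n; lia |].
    intros pol Hpol. eapply Rle_trans; [apply revenue_bound; assumption |].
    apply revenue_bound_ratio, Heps_n.
Qed.
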